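(* Let $E$ be a locally complete lcHs over $\mathbb{K}$, let $G\subset E'$ be a separating linear subspace, and let $\mathcal{F}(\Omega)$ and $\mathcal{F}(\Omega,E)$ be $\varepsilon$-into-compatible. Let $(T^{E},T^{\mathbb{K}})$ be a consistent and strong family for $(\mathcal{F},E)$, $\nu\colon\omega\to(0,\infty)$ a weight, and suppose $\mathcal{F}\nu(\Omega)$ is a Banach space whose closed unit ball $B_{\mathcal{F}\nu}$ is a compact subset of $\mathcal{F}(\Omega)$. Let $U\subset\omega$ fix the topology in $\mathcal{F}\nu(\Omega)$. Then for every $f\in\mathcal{F}\nu_{G}(U,E)$ such that $\{f(x)\nu(x): x\in U\}$ is bounded in $E$ there exists $F\in\mathcal{F}_{\varepsilon}\nu(\Omega,E)$ with $T^{E}(F)(x)=f(x)$ for all $x\in U$; i.e. the restriction map $R_{U,G}\colon\mathcal{F}_\varepsilon\nu(\Omega,E)\to\mathcal{F}\nu_G(U,E)_{lb}$, $F\mapsto(T^E(F)(x))_{x\in U}$, is surjective.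
   Context: $\mathbb{K}\in\{\mathbb{R},\mathbb{C}\}$; ''lcHs'' means locally convex Hausdorff space over $\mathbb{K}$; $E$ carries a directed fundamental system of seminorms $(p_\alpha)_{\alpha\in\mathfrak{A}}$ and $E'$ is its dual. $E$ is locally complete if for every closed bounded absolutely convex $D\subset E$ the space $\bigcup_n nD$ normed by the gauge of $D$ is a Banach space. A subspace $G\subset E'$ is separating if $e'(x)=0$ for all $e'\in G$ implies $x=0$. Framework: Let $\Omega,\omega$ be non-empty sets. For an lcHs $F$, $F'_\kappa$ is $F'$ with the topology of uniform convergence on absolutely convex compact subsets of $F$, and $F\varepsilon E:=L_e(F'_\kappa,E)$ is the space of continuous linear maps $F'_\kappa\to E$ with the topology of uniform convergence on equicontinuous subsets of $F'$. Let $\mathcal{F}(\Omega)\subset\mathbb{K}^\Omega$ and $\mathcal{F}(\Omega,E)\subset E^\Omega$ be linear subspaces carrying locally convex Hausdorff topologies with $\delta_x\in\mathcal{F}(\Omega)'$ for all $x\in\Omega$. Define $S\colon\mathcal{F}(\Omega)\varepsilon E\to E^\Omega$, $S(u)(x):=u(\delta_x)$. The spaces are $\varepsilon$-into-compatible if $S$ maps into $\mathcal{F}(\Omega,E)$ and is a linear topological isomorphism onto its range. Let $T^{\mathbb{K}}\colon\mathcal{F}(\Omega)\to\mathbb{K}^\omega$ and $T^{E}\colon\mathcal{F}(\Omega,E)\to E^\omega$ be linear and $T^{\mathbb{K}}_x:=\delta_x\circ T^{\mathbb{K}}$. $(T^E,T^{\mathbb{K}})$ is consistent for $(\mathcal{F},E)$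 if for every $u\in\mathcal{F}(\Omega)\varepsilon E$ we have $S(u)\in\mathcal{F}(\Omega,E)$ and for all $x\in\omega$: $T^{\mathbb{K}}_x\in\mathcal{F}(\Omega)'$ and $T^{E}(S(u))(x)=u(T^{\mathbb{K}}_x)$. It is strong for $(\mathcal{F},E)$ if for all $e'\in E'$, $f\in\mathcal{F}(\Omega,E)$: $e'\circ f\in\mathcal{F}(\Omega)$ and $T^{\mathbb{K}}(e'\circ f)(x)=e'(T^E(f)(x))$ for all $x\in\omega$. For a weight $\nu\colon\omega\to(0,\infty)$ set $\mathcal{F}\nu(\Omega,E):=\{f\in\mathcal{F}(\Omega,E): |f|_\alpha:=\sup_{x\in\omega}p_\alpha(T^E(f)(x))\nu(x)<\infty\ \forall\alpha\}$ with the topology of these seminorms, and $\mathcal{F}\nu(\Omega):=\{f\in\mathcal{F}(\Omega): |f|_{\mathcal{F}\nu}:=\sup_{x\in\omega}|T^{\mathbb{K}}(f)(x)|\nu(x)<\infty\}$. Let $B_{\mathcal{F}\nu}$ be the closed unit ball of $\mathcal{F}\nu(\Omega)$, $B^{\circ\mathcal{F}'}_{\mathcal{F}\nu}:=\{y'\in\mathcal{F}(\Omega)':|y'(f)|\le1\ \forall f\in B_{\mathcal{F}\nu}\}$ and $\mathcal{F}_\varepsilon\nu(\Omega,E):=S(\{u\in\mathcal{F}(\Omega)\varepsilon E: u(B^{\circ\mathcal{F}'}_{\mathcal{F}\nu})\text{ is bounded in }E\})$. A set $U\subset\omega$ fixes the topology in $\mathcal{F}\nu(\Omega)$ if there is $C>0$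 with $|f|_{\mathcal{F}\nu}\le C\sup_{x\in U}|T^{\mathbb{K}}(f)(x)|\nu(x)$ for all $f\in\mathcal{F}\nu(\Omega)$. $\mathcal{F}\nu_G(U,E)$ is the space of functions $f\colon U\to E$ such that for every $e'\in G$ there is $f_{e'}\in\mathcal{F}\nu(\Omega)$ with $T^{\mathbb{K}}(f_{e'})(x)=e'(f(x))$ for all $x\in U$; $\mathcal{F}\nu_G(U,E)_{lb}$ is the subspace of those $f$ for which $\{f(x)\nu(x):x\in U\}$ is bounded in $E$. *)

From Stdlib Require Import Reals List.
Open Scope R_scope.

Record Scalars := {
  Kt : Type; K0 : Kt; K1 : Kt;
  Kadd : Kt -> Kt -> Kt; Kmul : Kt -> Kt -> Kt; Kopp : Kt -> Kt;
  Kabs : Kt -> R; KofR : R -> Kt }.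

Definition R_scalars : Scalars :=
  {| Kt := R; K0 := 0; K1 := 1; Kadd := Rplus; Kmul := Rmult; Kopp := Ropp;
     Kabs := Rabs; KofR := fun r => r |}.

Definition Cpx : Type := (R * R)%type.
Definition C_scalars : Scalars :=
  {| Kt := Cpx; K0 := (0, 0); K1 := (1, 0);
     Kadd := fun z w => (fst z + fst w, snd z + snd w);
     Kmul := fun z w => (fst z * fst w - snd z * snd w, fst z * snd w + snd z * fst w);
     Kopp := fun z => (- fst z, - snd z);
     Kabs := fun z => sqrt (fst z * fst z + snd z * snd z);
     KofR := fun r => (r, 0) |}.

Inductive KField := KR | KC.
Definition scal (k : KField) : Scalars :=
  match k with KR => R_scalars | KC => C_scalars end.

Record LCHS (K : Scalars) := {
  car :> Type;
  vzero : car; vadd : car -> car -> car; vopp : car -> car;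
  vscale : Kt K -> car -> car;
  vadd_assoc : forall x y z, vadd x (vadd y z) = vadd (vadd x y) z;
  vadd_comm : forall x y, vadd x y = vadd y x;
  vadd_0 : forall x, vadd x vzero = x;
  vadd_opp : forall x, vadd x (vopp x) = vzero;
  vscale_1 : forall x, vscale (K1 K) x = x;
  vscale_assoc : forall a b x, vscale a (vscale b x) = vscale (Kmul K a b) x;
  vscale_distr_v : forall a x y, vscale a (vadd x y) = vadd (vscale a x) (vscale a y);
  vscale_distr_s : forall a b x, vscale (Kadd K a b) x = vadd (vscale a x) (vscale b x);
  sidx : Type;
  sidx_inh : inhabited sidx;
  sn : sidx -> car -> R;
  sn_nonneg : forall a x, 0 <= sn a x;
  sn_tri : forall a x y, sn a (vadd x y) <= sn a x + sn a y;
  sn_hom : forall a c x, sn a (vscale c x) = Kabs K c * sn a x;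
  sn_directed : forall a b, exists c C, forall x, sn a x <= C * sn c x /\ sn b x <= C * sn c x;
  sn_hausdorff : forall x, (forall a, sn a x = 0) -> x = vzero }.

Arguments car {K}. Arguments vzero {K}. Arguments vadd {K}. Arguments vopp {K}.
Arguments vscale {K}. Arguments sidx {K}. Arguments sn {K}.

Section LCS.
Context {K : Scalars} (E : LCHS K).

Definition vsub (x y : E) : E := vadd E x (vopp E y).

Definition is_dual (e : E -> Kt K) : Prop :=
  (forall x y, e (vadd E x y) = Kadd K (e x) (e y)) /\
  (forall c x, e (vscale E c x) = Kmul K c (e x)) /\
  exists a C, forall x, Kabs K (e x) <= C * sn E a x.

Definition bounded (B : E -> Prop) : Prop :=
  forall a, exists C, forall x, B x -> sn E a x <= C.

Definition abs_convex (D : E -> Prop) : Prop :=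
  forall x y c d, D x -> D y -> Kabs K c + Kabs K d <= 1 ->
    D (vadd E (vscale E c x) (vscale E d y)).

Definition is_open (O : E -> Prop) : Prop :=
  forall x, O x -> exists a eps, 0 < eps /\ forall y, sn E a (vsub y x) < eps -> O y.

Definition is_closed (D : E -> Prop) : Prop := is_open (fun x => ~ D x).

Definition mulset (D : E -> Prop) (t : R) (x : E) : Prop :=
  exists d, D d /\ x = vscale E (KofR K t) d.

Definition span_set (D : E -> Prop) (x : E) : Prop :=
  exists n : nat, mulset D (INR n) x.

(* For every closed bounded absolutely convex D, (span D, gauge of D) is a
   Banach space: Cauchy sequences w.r.t. the gauge converge w.r.t. the gauge.
   ("gauge(y) <= eps" is expressed as "y in eps D".) *)
Definition locally_complete : Prop :=
  forall D : E -> Prop, is_closed D -> bounded D -> abs_convex D ->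
  forall xs : nat -> E, (forall n, span_set D (xs n)) ->
  (forall eps, 0 < eps -> exists N, forall n m, (N <= n)%nat -> (N <= m)%nat ->
        mulset D eps (vsub (xs n) (xs m))) ->
  exists x, span_set D x /\
    forall eps, 0 < eps -> exists N, forall n, (N <= n)%nat -> mulset D eps (vsub (xs n) x).

Definition separating_subspace (G : (E -> Kt K) -> Prop) : Prop :=
  (forall e, G e -> is_dual e) /\
  G (fun _ => K0 K) /\
  (forall e1 e2, G e1 -> G e2 -> G (fun x => Kadd K (e1 x) (e2 x))) /\
  (forall c e, G e -> G (fun x => Kmul K c (e x))) /\
  (forall x, (forall e, G e -> e x = K0 K) -> x = vzero E).
End LCS.

Record FSpace (K : Scalars) (V : Type) (vz : V) (va : V -> V -> V)
       (vs : Kt K -> V -> V) (Om : Type) := {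
  mem : (Om -> V) -> Prop;
  mem0 : mem (fun _ => vz);
  mem_add : forall f g, mem f -> mem g -> mem (fun x => va (f x) (g x));
  mem_scale : forall c f, mem f -> mem (fun x => vs c (f x));
  fidx : Type;
  fidx_inh : inhabited fidx;
  fsn : fidx -> (Om -> V) -> R;
  fsn_nonneg : forall j f, mem f -> 0 <= fsn j f;
  fsn_tri : forall j f g, mem f -> mem g -> fsn j (fun x => va (f x) (g x)) <= fsn j f + fsn j g;
  fsn_hom : forall j c f, mem f -> fsn j (fun x => vs c (f x)) = Kabs K c * fsn j f;
  fsn_directed : forall j k, exists l C, forall f, mem f ->
      fsn j f <= C * fsn l f /\ fsn k f <= C * fsn l f;
  fsn_hausdorff : forall f, mem f -> (forall j, fsn j f = 0) -> forall x, f x = vz }.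

Arguments mem {K V vz va vs Om}. Arguments fidx {K V vz va vs Om}.
Arguments fsn {K V vz va vs Om}.

Definition FScal (K : Scalars) (Om : Type) : Type :=
  FSpace K (Kt K) (K0 K) (Kadd K) (Kmul K) Om.
Definition FVec {K : Scalars} (E : LCHS K) (Om : Type) : Type :=
  FSpace K (car E) (vzero E) (vadd E) (vscale E) Om.

Section Eps.
Context {K : Scalars} {Om : Type} (F : FScal K Om).

Definition fsub (f g : Om -> Kt K) : Om -> Kt K := fun x => Kadd K (f x) (Kopp K (g x)).

Definition fdual (y : (Om -> Kt K) -> Kt K) : Prop :=
  (forall f g, mem F f -> mem F g -> y (fun x => Kadd K (f x) (g x)) = Kadd K (y f) (y g)) /\
  (forall c f, mem F f -> y (fun x => Kmul K c (f x)) = Kmul K c (y f)) /\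
  exists j C, forall f, mem F f -> Kabs K (y f) <= C * fsn F j f.

Definition fopen (O : (Om -> Kt K) -> Prop) : Prop :=
  forall f, mem F f -> O f -> exists j eps, 0 < eps /\
    forall g, mem F g -> fsn F j (fsub g f) < eps -> O g.

Definition fcompact (S : (Om -> Kt K) -> Prop) : Prop :=
  (forall f, S f -> mem F f) /\
  forall (I : Type) (O : I -> (Om -> Kt K) -> Prop),
    (forall i, fopen (O i)) -> (forall f, S f -> exists i, O i f) ->
    exists l : list I, forall f, S f -> exists i, In i l /\ O i f.

Definition fabs_convex (S : (Om -> Kt K) -> Prop) : Prop :=
  forall f g c d, S f -> S g -> Kabs K c + Kabs K d <= 1 ->
    S (fun x => Kadd K (Kmul K c (f x)) (Kmul K d (g x))).

Definition equicont (H : ((Om -> Kt K) -> Kt K) -> Prop) : Prop :=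
  (forall y, H y -> fdual y) /\
  exists j C, forall y, H y -> forall f, mem F f -> Kabs K (y f) <= C * fsn F j f.

Context (E : LCHS K).

(* u is an element of F(Omega) eps E = L(F(Omega)'_kappa, E) *)
Definition is_eps (u : ((Om -> Kt K) -> Kt K) -> car E) : Prop :=
  (* well defined on F(Omega)' (functionals are identified on F(Omega)) *)
  (forall y1 y2, fdual y1 -> fdual y2 -> (forall f, mem F f -> y1 f = y2 f) -> u y1 = u y2) /\
  (forall y1 y2, fdual y1 -> fdual y2 ->
     u (fun f => Kadd K (y1 f) (y2 f)) = vadd E (u y1) (u y2)) /\
  (forall c y, fdual y -> u (fun f => Kmul K c (y f)) = vscale E c (u y)) /\
  (* continuous w.r.t. uniform convergence on absolutely convex compact sets *)
  (forall a, exists (Kc : (Om -> Kt K) -> Prop) C, fcompact Kc /\ fabs_convex Kc /\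
     forall y, fdual y -> forall c, (forall f, Kc f -> Kabs K (y f) <= c) ->
       sn E a (u y) <= C * c).

Definition Smap (u : ((Om -> Kt K) -> Kt K) -> car E) : Om -> car E :=
  fun x => u (fun f => f x).

Definition eps_into_compatible (FE : FVec E Om) : Prop :=
  (forall u, is_eps u -> mem FE (Smap u)) /\
  (forall u1 u2, is_eps u1 -> is_eps u2 -> Smap u1 = Smap u2 ->
     forall y, fdual y -> u1 y = u2 y) /\
  (forall j : fidx FE, exists H a C, equicont H /\
     forall u, is_eps u -> forall c, (forall y, H y -> sn E a (u y) <= c) ->
       fsn FE j (Smap u) <= C * c) /\
  (forall H a, equicont H -> exists (j : fidx FE) C,
     forall u, is_eps u -> forall y, H y -> sn E a (u y) <= C * fsn FE j (Smap u)).

Context {w : Type} (FE : FVec E Om)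
        (TK : (Om -> Kt K) -> (w -> Kt K)) (TE : (Om -> car E) -> (w -> car E)).

Definition TK_linear : Prop :=
  (forall f g, mem F f -> mem F g ->
     TK (fun z => Kadd K (f z) (g z)) = (fun x => Kadd K (TK f x) (TK g x))) /\
  (forall c f, mem F f -> TK (fun z => Kmul K c (f z)) = (fun x => Kmul K c (TK f x))).

Definition TE_linear : Prop :=
  (forall f g, mem FE f -> mem FE g ->
     TE (fun z => vadd E (f z) (g z)) = (fun x => vadd E (TE f x) (TE g x))) /\
  (forall c f, mem FE f -> TE (fun z => vscale E c (f z)) = (fun x => vscale E c (TE f x))).

Definition consistent : Prop :=
  forall u, is_eps u -> mem FE (Smap u) /\
    forall x, fdual (fun f => TK f x) /\ TE (Smap u) x = u (fun f => TK f x).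

Definition strong : Prop :=
  forall e, is_dual E e -> forall f, mem FE f ->
    mem F (fun z => e (f z)) /\ forall x, TK (fun z => e (f z)) x = e (TE f x).

Context (nu : w -> R).

Definition inFnu (f : Om -> Kt K) : Prop :=
  mem F f /\ exists C, forall x, Kabs K (TK f x) * nu x <= C.

Definition nu_le (f : Om -> Kt K) (c : R) : Prop :=
  forall x, Kabs K (TK f x) * nu x <= c.

Definition Fnu_Banach : Prop :=
  (forall f, inFnu f -> nu_le f 0 -> forall z, f z = K0 K) /\
  forall fs : nat -> Om -> Kt K, (forall n, inFnu (fs n)) ->
    (forall eps, 0 < eps -> exists N, forall n m, (N <= n)%nat -> (N <= m)%nat ->
        nu_le (fsub (fs n) (fs m)) eps) ->
    exists f, inFnu f /\
      forall eps, 0 < eps -> exists N, forall n, (N <= n)%nat -> nu_le (fsub (fs n) f) eps.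

Definition Bnu (f : Om -> Kt K) : Prop := inFnu f /\ nu_le f 1.

Definition Bpolar (y : (Om -> Kt K) -> Kt K) : Prop :=
  fdual y /\ forall f, Bnu f -> Kabs K (y f) <= 1.

Definition Feps_nu (Fn : Om -> car E) : Prop :=
  exists u, is_eps u /\ bounded E (fun e => exists y, Bpolar y /\ e = u y) /\ Fn = Smap u.

Definition fixes_topology (U : w -> Prop) : Prop :=
  exists C, 0 < C /\ forall f, inFnu f -> forall c, 0 <= c ->
    (forall x, U x -> Kabs K (TK f x) * nu x <= c) -> nu_le f (C * c).

(* f in F nu_G(U, E) (functions on U represented as functions on w,
   only their values on U matter) *)
Definition FnuG (G : (car E -> Kt K) -> Prop) (U : w -> Prop) (f : w -> car E) : Prop :=
  forall e, G e -> exists fe, inFnu fe /\ forall x, U x -> TK fe x = e (f x).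

Definition lb (U : w -> Prop) (f : w -> car E) : Prop :=
  bounded E (fun v => exists x, U x /\ v = vscale E (KofR K (nu x)) (f x)).
End Eps.

From Pilot Require Import Defs.
From Stdlib Require Import Reals Lra Lia List Classical ClassicalEpsilon FunctionalExtensionality.
Open Scope R_scope.

(* The extension is the restriction to [Om] of an operator [u] on [F(Om)'] with
   [u (T_x) = f x] for [x] in [U].  A functional [y] bounded by [c] on the compact
   ball of [F nu] is approximated on that ball to within [c/2] by a finite
   combination [sum_i a_i nu(x_i) T_{x_i}] with [x_i] in [U] and [sum_i |a_i| <= Cf c]:
   since [U] fixes the topology such combinations dominate [y] pointwise, and
   compactness plus a minimax argument make the domination uniform.  Iterating on
   the residual writes [y] as a series of such combinations; the corresponding
   series [sum_i a_i nu(x_i) f(x_i)] converges in [E] by local completeness,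
   applied to the closed absolutely convex set determined by the bounded set
   [{nu(x) f(x) | x in U}].  Its limit [u y] is the unique vector with
   [e (u y) = y f_e] for [e] in [G]; this makes [u] linear, continuous and bounded on
   the polar of the ball, and consistency turns [u (T_x) = f x] into [T^E(S u) x = f x]. *)

Lemma Rdiv_le_0_compat (a b : R) : 0 <= a -> 0 < b -> 0 <= a / b.
Proof. intros; apply Rle_mult_inv_pos; auto. Qed.

Lemma Rabs_sub_le x c M : Rabs x <= M -> 0 <= c -> Rabs (x - c) <= M + c.
Proof. unfold Rabs; repeat destruct Rcase_abs; lra. Qed.

Lemma le_abs_bound (x M : R) : Rabs x <= M -> x <= M /\ - x <= M.
Proof. unfold Rabs; destruct Rcase_abs; lra. Qed.

Lemma half_pow_pos n : 0 < (/ 2) ^ n.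
Proof. apply pow_lt; lra. Qed.

Lemma half_pow_le m n : (m <= n)%nat -> (/ 2) ^ n <= (/ 2) ^ m.
Proof.
  intros Hmn. replace n with (m + (n - m))%nat by lia.
  induction (n - m)%nat as [|d IH]; [rewrite Nat.add_0_r; lra|].
  rewrite Nat.add_succ_r; simpl. pose proof (half_pow_pos (m + d)). lra.
Qed.

Lemma half_pow_lt r : 0 < r -> exists N, (/ 2) ^ N < r.
Proof.
  intros Hr. destruct (pow_lt_1_zero (/ 2)) with (y := r) as [N HN]; auto.
  - rewrite Rabs_right; lra.
  - exists N. specialize (HN N (le_n N)).
    rewrite Rabs_right in HN; auto. left; apply half_pow_pos.
Qed.

(** * A finite-dimensional minimax theorem *)

Section Minimax.
Variables (S : Type) (conv : R -> S -> S -> S).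

Definition convex_set (X : S -> Prop) : Prop :=
  forall t g1 g2, 0 <= t <= 1 -> X g1 -> X g2 -> X (conv t g1 g2).

Definition affine_on (X : S -> Prop) (h : S -> R) : Prop :=
  forall t g1 g2, 0 <= t <= 1 -> X g1 -> X g2 -> h (conv t g1 g2) = (1 - t) * h g1 + t * h g2.

Section TwoFunctions.
Variables (X : S -> Prop) (h1 h2 : S -> R) (M d : R).
Hypothesis X_convex : convex_set X.
Hypotheses (h1_affine : affine_on X h1) (h2_affine : affine_on X h2).
Hypothesis h_bounded : forall g, X g -> Rabs (h1 g) <= M /\ Rabs (h2 g) <= M.
Hypothesis d_pos : 0 < d.
Hypothesis max_gt : forall g, X g -> h1 g > d \/ h2 g > d.

(* At a point p with [h1 p <= 0] the combination [(1 - t) h1 + t h2] is positive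
   exactly for [t > lower p]; at q with [h2 q <= 0] exactly for [t < upper q]. *)
Let lower p := - h1 p / (h2 p - h1 p).
Let upper q := h1 q / (h1 q - h2 q).
Let eta := d * d / (4 * (M * M)).

Lemma lower_bounds p : X p -> h1 p <= 0 -> 0 <= lower p.
Proof. intros Xp Hp. destruct (max_gt p Xp); [lra|]. apply Rdiv_le_0_compat; lra. Qed.

Lemma upper_bounds q : X q -> h2 q <= 0 -> upper q <= 1.
Proof.
  intros Xq Hq. destruct (max_gt q Xq); [|lra].
  apply Rmult_le_reg_r with (h1 q - h2 q); [lra|]. unfold upper. field_simplify; lra.
Qed.

Lemma lower_upper_gap p q : X p -> h1 p <= 0 -> X q -> h2 q <= 0 -> lower p + eta <= upper q.
Proof.
  intros Xp Hp Xq Hq.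
  assert (Hv1 : h2 p > d) by (destruct (max_gt p Xp); lra).
  assert (Hu2 : h1 q > d) by (destruct (max_gt q Xq); lra).
  destruct (h_bounded p Xp) as [Bp1 Bp2]. destruct (h_bounded q Xq) as [Bq1 Bq2].
  apply le_abs_bound in Bp1, Bp2, Bq1, Bq2.
  unfold lower, upper, eta.
  set (u1 := h1 p) in *. set (v1 := h2 p) in *. set (u2 := h1 q) in *. set (v2 := h2 q) in *.
  (* [h1] vanishes at [conv s p q], so [h2 > d] there; this bounds the gap below by
     [d^2] over a denominator at most [4 M^2] *)
  set (s := - u1 / (u2 - u1)).
  assert (Hs : 0 <= s <= 1).
  { unfold s. split; [apply Rdiv_le_0_compat; lra|].
    apply Rmult_le_reg_r with (u2 - u1); [lra|]. field_simplify; lra. }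
  assert (Xs := X_convex s p q Hs Xp Xq).
  assert (E1 : h1 (conv s p q) = 0) by (rewrite h1_affine by auto; unfold s; fold u1 u2; field; lra).
  assert (E2 : h2 (conv s p q) = (u2 * v1 - u1 * v2) / (u2 - u1))
    by (rewrite h2_affine by auto; unfold s; fold v1 v2; field; lra).
  assert (Num : u2 * v1 - u1 * v2 > d * d).
  { destruct (max_gt _ Xs) as [Hm|Hm]; rewrite ?E1, ?E2 in Hm; [lra|].
    apply Rmult_lt_compat_r with (r := u2 - u1) in Hm; [|lra].
    unfold Rdiv in Hm. rewrite Rmult_assoc, Rinv_l in Hm by lra. nra. }
  assert (Hden : 0 < (u2 - v2) * (v1 - u1) <= 4 * (M * M)) by (split; nra).
  assert (Eq : u2 / (u2 - v2) - - u1 / (v1 - u1) = (u2 * v1 - u1 * v2) / ((u2 - v2) * (v1 - u1)))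
    by (field; lra).
  assert (d * d / (4 * (M * M)) <= (u2 * v1 - u1 * v2) / ((u2 - v2) * (v1 - u1))).
  { apply Rle_trans with (d * d / ((u2 - v2) * (v1 - u1))).
    - apply Rmult_le_compat_l; [nra|]. apply Rinv_le_contravar; lra.
    - apply Rmult_le_compat_r; [left; apply Rinv_0_lt_compat|]; lra. }
  lra.
Qed.

Lemma two_function_minimax :
  exists t, 0 <= t <= 1 /\ forall g, X g -> (1 - t) * h1 g + t * h2 g > 0.
Proof.
  destruct (classic (exists p, X p /\ h1 p <= 0)) as [[p0 [Xp0 Hp0]]|NP].
  2:{ exists 0. split; [lra|]. intros g Xg.
      assert (h1 g > 0) by (apply Rnot_le_lt; intro; apply NP; eauto). lra. }
  destruct (classic (exists q, X q /\ h2 q <= 0)) as [[q0 [Xq0 Hq0]]|NQ].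
  2:{ exists 1. split; [lra|]. intros g Xg.
      assert (h2 g > 0) by (apply Rnot_le_lt; intro; apply NQ; eauto). lra. }
  assert (Heta : 0 < eta).
  { destruct (h_bounded p0 Xp0) as [_ Bp]. apply le_abs_bound in Bp.
    assert (0 < M) by (destruct (max_gt p0 Xp0); lra).
    unfold eta. apply Rdiv_lt_0_compat; nra. }
  set (Lows := fun r => exists p, X p /\ h1 p <= 0 /\ r = lower p).
  destruct (completeness Lows) as [T [T_ub T_lub]].
  { exists (upper q0). intros r [p [Xp [Hp ->]]].
    pose proof (lower_upper_gap p q0 Xp Hp Xq0 Hq0). lra. }
  { exists (lower p0), p0. auto. }
  assert (Tp : forall p, X p -> h1 p <= 0 -> lower p <= T) by (intros p Xp Hp; apply T_ub; exists p; auto).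
  assert (Tq : forall q, X q -> h2 q <= 0 -> T + eta <= upper q).
  { intros q Xq Hq. enough (T <= upper q - eta) by lra.
    apply T_lub. intros r [p [Xp [Hp ->]]]. pose proof (lower_upper_gap p q Xp Hp Xq Hq). lra. }
  assert (Ht : 0 <= T + eta / 2 <= 1).
  { pose proof (Tp p0 Xp0 Hp0). pose proof (lower_bounds p0 Xp0 Hp0).
    pose proof (Tq q0 Xq0 Hq0). pose proof (upper_bounds q0 Xq0 Hq0). lra. }
  exists (T + eta / 2). split; [exact Ht|]. intros g Xg.
  destruct (Rle_dec (h1 g) 0) as [H1|H1]; [|destruct (Rle_dec (h2 g) 0) as [H2|H2]].
  - pose proof (Tp g Xg H1). assert (h2 g > d) by (destruct (max_gt g Xg); lra).
    assert (Hlt : lower g < T + eta / 2) by lra. unfold lower in Hlt.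
    apply Rmult_lt_compat_r with (r := h2 g - h1 g) in Hlt; [|lra].
    unfold Rdiv in Hlt. rewrite Rmult_assoc, Rinv_l in Hlt by lra. nra.
  - pose proof (Tq g Xg H2). assert (h1 g > d) by (destruct (max_gt g Xg); lra).
    assert (Hlt : T + eta / 2 < upper g) by lra. unfold upper in Hlt.
    apply Rmult_lt_compat_r with (r := h1 g - h2 g) in Hlt; [|lra].
    unfold Rdiv in Hlt. rewrite Rmult_assoc, Rinv_l in Hlt by lra. nra.
  - nra.
Qed.
End TwoFunctions.

Section FiniteCover.
Variables (A : Type) (As : A -> Prop) (cmb : R -> A -> A -> A) (h : A -> S -> R)
  (M : R) (Xs : S -> Prop) (a0 : A).
Hypothesis a0_in : As a0.
Hypothesis cmb_in : forall t a1 a2, 0 <= t <= 1 -> As a1 -> As a2 -> As (cmb t a1 a2).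
Hypothesis h_cmb : forall t a1 a2 g, 0 <= t <= 1 -> As a1 -> As a2 -> Xs g ->
  h (cmb t a1 a2) g = (1 - t) * h a1 g + t * h a2 g.
Hypothesis h_affine : forall a, As a -> affine_on Xs (h a).
Hypothesis h_bounded : forall a g, As a -> Xs g -> Rabs (h a g) <= M.

(* Induction on the cover: the new member [a] is merged with the function [b]
   obtained on the convex part where [a] is small, using the two-function case. *)
Lemma finite_cover_minimax (l : list A) :
  forall (X : S -> Prop) d, (forall g, X g -> Xs g) -> convex_set X -> 0 < d ->
  (forall g, X g -> exists a, In a l /\ As a /\ h a g > d) ->
  exists a, As a /\ exists d', 0 < d' /\ forall g, X g -> h a g > d'.
Proof.
  induction l as [|a l IH]; intros X d HX CX Hd Hcov.
  { exists a0. split; auto. exists 1. split; [lra|]. intros g Xg. destruct (Hcov g Xg) as [? [[] _]]. }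
  destruct (classic (As a)) as [Ha|Ha].
  2:{ apply (IH X d); auto. intros g Xg. destruct (Hcov g Xg) as [c [[<-|Hc] Hc2]]; [tauto|eauto]. }
  set (X' := fun g => X g /\ h a g <= d / 2).
  destruct (IH X' d) as [b [Hb [d1 [Hd1 Hb1]]]]; auto.
  { intros g [Xg _]; auto. }
  { intros t g1 g2 Ht [X1 H1] [X2 H2]. split; [apply CX; auto|].
    rewrite (h_affine a Ha) by auto. nra. }
  { intros g [Xg Hg]. destruct (Hcov g Xg) as [c [[<-|Hc] Hc2]]; [lra|eauto]. }
  set (d2 := Rmin d1 (d / 2)).
  assert (Hd2 : 0 < d2) by (unfold d2; apply Rmin_glb_lt; lra).
  pose proof (Rmin_l d1 (d / 2)). pose proof (Rmin_r d1 (d / 2)). fold d2 in H, H0.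
  destruct (two_function_minimax X (fun g => h b g - d2 / 2) (fun g => h a g - d2 / 2)
              (M + d2 / 2) (d2 / 2)) as [t [Ht Hall]]; auto.
  { intros t g1 g2 Ht X1 X2. rewrite (h_affine b Hb) by auto. ring. }
  { intros t g1 g2 Ht X1 X2. rewrite (h_affine a Ha) by auto. ring. }
  { intros g Xg. split; apply Rabs_sub_le; try lra; apply h_bounded; auto. }
  { lra. }
  { intros g Xg. destruct (Rle_dec (h a g) (d / 2)).
    - left. assert (h b g > d1) by (apply Hb1; split; auto). lra.
    - right. lra. }
  exists (cmb t b a). split; [apply cmb_in; auto|].
  exists (d2 / 2). split; [lra|]. intros g Xg. rewrite h_cmb by auto.
  specialize (Hall g Xg). simpl in Hall. nra.
Qed.
End FiniteCover.
End Minimax.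

Section Field.
Variable k : KField.
Notation KK := (scal k).
Notation Kt := (Defs.Kt KK).
Notation kadd := (Kadd KK).
Notation kmul := (Kmul KK).
Notation kopp := (Kopp KK).
Notation kabs := (Kabs KK).
Notation kofR := (KofR KK).
Notation k0 := (K0 KK).
Notation k1 := (K1 KK).

Lemma K_ring : ring_theory k0 k1 kadd kmul (fun a b => kadd a (kopp b)) kopp (@eq Kt).
Proof.
  destruct k; constructor; simpl; intros;
  try (apply injective_projections; simpl); ring.
Qed.
Add Ring K_ring : K_ring.

Definition Kre (z : Kt) : R :=
  match k return Defs.Kt (scal k) -> R with KR => fun z => z | KC => fun z => fst z end z.

Lemma kabs_ge0 z : 0 <= kabs z.
Proof. destruct k; simpl; [apply Rabs_pos|apply sqrt_pos]. Qed.

Lemma kabs_mult a b : kabs (kmul a b) = kabs a * kabs b.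
Proof.
  destruct k; simpl; [apply Rabs_mult|].
  rewrite <- sqrt_mult by nra. f_equal. ring.
Qed.

Lemma kabs_triang a b : kabs (kadd a b) <= kabs a + kabs b.
Proof.
  destruct k; simpl; [apply Rabs_triang|].
  destruct a as [a1 a2], b as [b1 b2]; simpl.
  set (p := sqrt (a1*a1+a2*a2)). set (q := sqrt (b1*b1+b2*b2)).
  assert (Hp : 0 <= p) by apply sqrt_pos. assert (Hq : 0 <= q) by apply sqrt_pos.
  assert (Hp2 : p*p = a1*a1+a2*a2) by (apply sqrt_sqrt; nra).
  assert (Hq2 : q*q = b1*b1+b2*b2) by (apply sqrt_sqrt; nra).
  rewrite <- (sqrt_square (p+q)) by lra. apply sqrt_le_1_alt.
  clearbody p q.
  assert (Cauchy_Schwarz : a1*b1+a2*b2 <= p*q).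
  { assert ((a1*b1+a2*b2)*(a1*b1+a2*b2) <= (p*q)*(p*q)).
    { replace ((p*q)*(p*q)) with ((p*p)*(q*q)) by ring. rewrite Hp2, Hq2.
      pose proof (Rle_0_sqr (a1*b2-a2*b1)). unfold Rsqr in *. nra. }
    assert (0 <= p*q) by nra. nra. }
  nra.
Qed.

Lemma kabs_0 : kabs k0 = 0.
Proof. destruct k; simpl; [apply Rabs_R0|]. replace (0*0+0*0) with 0 by ring. apply sqrt_0. Qed.

Lemma kabs_eq_0 a : kabs a = 0 -> a = k0.
Proof.
  destruct k; simpl; intro H.
  - destruct (Rcase_abs a); [rewrite Rabs_left in H|rewrite Rabs_right in H]; lra.
  - destruct a as [a1 a2]; simpl in *. apply sqrt_eq_0 in H; [|nra].
    assert (a1 = 0) by nra. assert (a2 = 0) by nra. subst; auto.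
Qed.

Lemma kabs_ofR r : kabs (kofR r) = Rabs r.
Proof.
  destruct k; simpl; auto.
  replace (r*r+0*0) with (Rsqr r) by (unfold Rsqr; ring). apply sqrt_Rsqr_abs.
Qed.

Lemma kabs_ofR_pos r : 0 <= r -> kabs (kofR r) = r.
Proof. intros. rewrite kabs_ofR, Rabs_right; lra. Qed.

Lemma kabs_1 : kabs k1 = 1.
Proof. destruct k; simpl; [apply Rabs_R1|]. replace (1*1+0*0) with 1 by ring. apply sqrt_1. Qed.

Lemma kabs_opp a : kabs (kopp a) = kabs a.
Proof. destruct k; simpl; [apply Rabs_Ropp|]. f_equal. ring. Qed.

Lemma kofR_plus r s : kofR (r + s) = kadd (kofR r) (kofR s).
Proof. destruct k; simpl; auto. apply injective_projections; simpl; ring. Qed.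

Lemma kofR_mult r s : kofR (r * s) = kmul (kofR r) (kofR s).
Proof. destruct k; simpl; auto. apply injective_projections; simpl; ring. Qed.

Lemma kofR_1 : kofR 1 = k1.
Proof. destruct k; simpl; auto. Qed.

Lemma kofR_0 : kofR 0 = k0.
Proof. destruct k; simpl; auto. Qed.

Lemma kre_plus a b : Kre (kadd a b) = Kre a + Kre b.
Proof. unfold Kre; destruct k; simpl; auto. Qed.

Lemma kre_opp a : Kre (kopp a) = - Kre a.
Proof. unfold Kre; destruct k; simpl; auto. Qed.

Lemma kre_ofR_mult r a : Kre (kmul (kofR r) a) = r * Kre a.
Proof. unfold Kre; destruct k; simpl; auto. ring. Qed.

Lemma kre_ofR r : Kre (kofR r) = r.
Proof. unfold Kre; destruct k; simpl; auto. Qed.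

Lemma kre_0 : Kre k0 = 0.
Proof. rewrite <- kofR_0, kre_ofR. auto. Qed.

Lemma kre_le_kabs a : Kre a <= kabs a.
Proof.
  unfold Kre; destruct k; simpl; [apply Rle_abs|]. destruct a as [a1 a2]; simpl.
  apply Rle_trans with (Rabs a1); [apply Rle_abs|].
  rewrite <- sqrt_Rsqr_abs. apply sqrt_le_1_alt. pose proof (Rle_0_sqr a2). unfold Rsqr in *; lra.
Qed.

Lemma Rabs_kre_le a : Rabs (Kre a) <= kabs a.
Proof.
  apply Rabs_le. split; [|apply kre_le_kabs].
  rewrite <- (kabs_opp a). pose proof (kre_le_kabs (kopp a)). rewrite kre_opp in H. lra.
Qed.

Lemma kre_conv t a b :
  Kre (kadd (kmul (kofR (1 - t)) a) (kmul (kofR t) b)) = (1 - t) * Kre a + t * Kre b.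
Proof. rewrite kre_plus, !kre_ofR_mult. auto. Qed.

Lemma kconv_sub t a b c :
  kadd (kadd (kmul (kofR (1 - t)) a) (kmul (kofR t) b)) (kopp c)
  = kadd (kmul (kofR (1 - t)) (kadd a (kopp c))) (kmul (kofR t) (kadd b (kopp c))).
Proof.
  assert (Hs : kadd (kofR (1 - t)) (kofR t) = k1)
    by (rewrite <- kofR_plus, <- kofR_1; f_equal; ring).
  transitivity (kadd (kadd (kmul (kofR (1 - t)) a) (kmul (kofR t) b))
                     (kmul (kadd (kofR (1 - t)) (kofR t)) (kopp c))); [rewrite Hs|]; ring.
Qed.

Lemma kabs_rotation a : exists l, kabs l = 1 /\ kmul l a = kofR (kabs a).
Proof.
  destruct k; simpl.
  - destruct (Rcase_abs a).
    + exists (-1). split; rewrite Rabs_left; lra.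
    + exists 1. split; [rewrite Rabs_right|rewrite (Rabs_right a)]; lra.
  - destruct a as [a1 a2]; simpl. set (s := sqrt (a1*a1+a2*a2)).
    assert (Hs2 : s*s = a1*a1+a2*a2) by (apply sqrt_sqrt; nra).
    destruct (Req_dec s 0) as [H0|H0].
    + exists (1,0). simpl. split; [replace (1*1+0*0) with 1 by ring; apply sqrt_1|].
      assert (a1 = 0) by nra. assert (a2 = 0) by nra. subst. rewrite H0.
      apply injective_projections; simpl; ring.
    + exists (a1/s, - a2/s). simpl. split.
      * replace (a1 / s * (a1 / s) + - a2 / s * (- a2 / s)) with 1; [apply sqrt_1|].
        transitivity ((a1*a1+a2*a2)/(s*s)); [rewrite <- Hs2|]; field; auto.
      * apply injective_projections; simpl; [|field; auto].
        transitivity ((a1*a1+a2*a2)/s); [|rewrite <- Hs2]; field; auto.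
Qed.

Lemma ksub_eq_0 a b : kadd a (kopp b) = k0 -> a = b.
Proof. intros H. transitivity (kadd (kadd a (kopp b)) b); [ring|]. rewrite H. ring. Qed.

Section VectorSpace.
Variable E : LCHS KK.
Notation vadd := (vadd E). Notation vscale := (vscale E). Notation vzero := (vzero E).
Notation vopp := (vopp E). Notation vsub := (vsub E). Notation sn := (sn E).

Lemma vscale_0_l x : vscale k0 x = vzero.
Proof.
  set (a := vscale k0 x).
  assert (Ha : a = vadd a a) by (unfold a; rewrite <- vscale_distr_s; f_equal; ring).
  rewrite <- (vadd_opp _ E a). rewrite Ha at 2. rewrite <- vadd_assoc, vadd_opp, vadd_0. auto.
Qed.

Lemma vopp_vscale x : vopp x = vscale (kopp k1) x.
Proof.
  assert (Hb : vadd x (vscale (kopp k1) x) = vzero).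
  { rewrite <- (vscale_1 _ E x) at 1. rewrite <- vscale_distr_s.
    replace (kadd k1 (kopp k1)) with k0 by ring. apply vscale_0_l. }
  rewrite <- (vadd_0 _ E (vopp x)), <- Hb, vadd_assoc, (vadd_comm _ E (vopp x) x), vadd_opp.
  rewrite vadd_comm, vadd_0. auto.
Qed.

Lemma vscale_0_r c : vscale c vzero = vzero.
Proof.
  rewrite <- (vscale_0_l vzero) at 1. rewrite vscale_assoc.
  replace (kmul c k0) with k0 by ring. apply vscale_0_l.
Qed.

Lemma sn_vzero a : sn a vzero = 0.
Proof. rewrite <- (vscale_0_l vzero), sn_hom, kabs_0. ring. Qed.

Lemma sn_vsub_comm a x y : sn a (vsub y x) = sn a (vsub x y).
Proof.
  assert (vsub y x = vscale (kopp k1) (vsub x y)).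
  { unfold Defs.vsub. rewrite !vopp_vscale, vscale_distr_v, vscale_assoc.
    replace (kmul (kopp k1) (kopp k1)) with k1 by ring. rewrite vscale_1, vadd_comm. auto. }
  rewrite H, sn_hom, kabs_opp, kabs_1. ring.
Qed.

Lemma vsub_vadd_l x z y : vsub (vadd x z) y = vadd (vsub x y) z.
Proof. unfold Defs.vsub. rewrite <- !vadd_assoc. f_equal. apply vadd_comm. Qed.

Lemma vadd_vsub x y : vadd y (vsub x y) = x.
Proof.
  unfold Defs.vsub. rewrite vadd_assoc, (vadd_comm _ E y x), <- vadd_assoc, vadd_opp, vadd_0. auto.
Qed.

Lemma vsub_vzero x : vsub x vzero = x.
Proof. unfold Defs.vsub. rewrite vopp_vscale, vscale_0_r, vadd_0. auto. Qed.

Lemma vsub_eq_vzero x y : vsub x y = vzero -> x = y.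
Proof. intros H. rewrite <- (vadd_vsub x y), H, vadd_0. auto. Qed.

Lemma sn_le_vsub a x y : sn a x <= sn a y + sn a (vsub x y).
Proof. rewrite <- (vadd_vsub x y) at 1. apply sn_tri. Qed.

Lemma dual_vzero e : is_dual E e -> e vzero = k0.
Proof. intros [_ [H _]]. rewrite <- (vscale_0_l vzero), H. ring. Qed.

Lemma dual_vsub e x y : is_dual E e -> e (vsub x y) = kadd (e x) (kopp (e y)).
Proof. intros [H1 [H2 _]]. unfold Defs.vsub. rewrite H1, vopp_vscale, H2. ring. Qed.
End VectorSpace.

(** * Scalar functions and the unit ball of [F nu] *)

Section Construction.
Variables (Om w : Type) (F : FScal KK Om) (TK : (Om -> Kt) -> (w -> Kt)) (nu : w -> R).
Hypothesis TK_lin : TK_linear F TK.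
Hypothesis nu_pos : forall x, 0 < nu x.
Hypothesis Fnu_banach : Fnu_Banach F TK nu.
Hypothesis ball_compact : fcompact F (Bnu F TK nu).
Hypothesis TK_dual : forall x, fdual F (fun g => TK g x).

Notation memF := (mem F).
Notation Bn := (Bnu F TK nu).

Definition fadd (g1 g2 : Om -> Kt) : Om -> Kt := fun z => kadd (g1 z) (g2 z).
Definition fscale (c : Kt) (g : Om -> Kt) : Om -> Kt := fun z => kmul c (g z).
Definition fconv (t : R) (g1 g2 : Om -> Kt) := fadd (fscale (kofR (1 - t)) g1) (fscale (kofR t) g2).
Definition fzero : Om -> Kt := fun _ => k0.

Lemma memF_add g1 g2 : memF g1 -> memF g2 -> memF (fadd g1 g2).
Proof. exact (mem_add _ _ _ _ _ _ F g1 g2). Qed.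

Lemma memF_scale c g : memF g -> memF (fscale c g).
Proof. exact (mem_scale _ _ _ _ _ _ F c g). Qed.

Lemma memF_0 : memF fzero.
Proof. exact (mem0 _ _ _ _ _ _ F). Qed.

Lemma fsub_eq g1 g2 : fsub g1 g2 = fadd g1 (fscale (kopp k1) g2).
Proof. apply functional_extensionality; intro; unfold fsub, fadd, fscale; ring. Qed.

Lemma memF_sub g1 g2 : memF g1 -> memF g2 -> memF (fsub g1 g2).
Proof. intros. rewrite fsub_eq. apply memF_add, memF_scale; auto. Qed.

Lemma fscale_0_fzero : fscale k0 fzero = fzero.
Proof. apply functional_extensionality; intro; unfold fscale, fzero; ring. Qed.

Lemma TK_add g1 g2 x : memF g1 -> memF g2 -> TK (fadd g1 g2) x = kadd (TK g1 x) (TK g2 x).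
Proof. intros H1 H2. destruct TK_lin as [H _]. unfold fadd. rewrite H; auto. Qed.

Lemma TK_scale c g x : memF g -> TK (fscale c g) x = kmul c (TK g x).
Proof. intros Hg. destruct TK_lin as [_ H]. unfold fscale. rewrite H; auto. Qed.

Lemma TK_0 x : TK fzero x = k0.
Proof. rewrite <- fscale_0_fzero, TK_scale by apply memF_0. ring. Qed.

Definition linear_on_F (y : (Om -> Kt) -> Kt) : Prop :=
  (forall g1 g2, memF g1 -> memF g2 -> y (fadd g1 g2) = kadd (y g1) (y g2)) /\
  (forall c g, memF g -> y (fscale c g) = kmul c (y g)).

Lemma fdual_linear y : fdual F y -> linear_on_F y.
Proof. intros [H1 [H2 _]]. split; auto. Qed.

Lemma linear_0 y : linear_on_F y -> y fzero = k0.
Proof. intros [_ H]. rewrite <- fscale_0_fzero, H by apply memF_0. ring. Qed.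

Lemma linear_conv y t g1 g2 : linear_on_F y -> memF g1 -> memF g2 ->
  y (fconv t g1 g2) = kadd (kmul (kofR (1 - t)) (y g1)) (kmul (kofR t) (y g2)).
Proof. intros [H1 H2] ? ?. unfold fconv. rewrite H1, !H2; auto; apply memF_scale; auto. Qed.

Lemma linear_sub y g1 g2 : linear_on_F y -> memF g1 -> memF g2 ->
  y (fsub g1 g2) = kadd (y g1) (kopp (y g2)).
Proof. intros [H1 H2] ? ?. rewrite fsub_eq, H1, H2; auto; [ring|apply memF_scale; auto]. Qed.

Lemma fsn_le_sub j g1 g2 : memF g1 -> memF g2 -> fsn F j g1 <= fsn F j (fsub g1 g2) + fsn F j g2.
Proof.
  intros. replace g1 with (fadd (fsub g1 g2) g2) at 1.
  - apply fsn_tri; auto. apply memF_sub; auto.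
  - apply functional_extensionality; intro; unfold fsub, fadd; ring.
Qed.

Lemma Rmult_le_Rabs_mult C s : 0 <= s -> C * s <= Rabs C * s.
Proof. intros. apply Rmult_le_compat_r; auto. apply Rle_abs. Qed.

Lemma fdual_add y1 y2 : fdual F y1 -> fdual F y2 -> fdual F (fun g => kadd (y1 g) (y2 g)).
Proof.
  intros [A1 [B1 [j1 [C1 H1]]]] [A2 [B2 [j2 [C2 H2]]]].
  split; [|split].
  - intros. rewrite A1, A2 by auto. ring.
  - intros. rewrite B1, B2 by auto. ring.
  - destruct (fsn_directed _ _ _ _ _ _ F j1 j2) as [l [C HC]].
    exists l, (Rabs C1 * C + Rabs C2 * C). intros g Hg.
    destruct (HC g Hg) as [Q1 Q2].
    eapply Rle_trans; [apply kabs_triang|].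
    specialize (H1 g Hg). specialize (H2 g Hg).
    pose proof (fsn_nonneg _ _ _ _ _ _ F j1 g Hg). pose proof (fsn_nonneg _ _ _ _ _ _ F j2 g Hg).
    pose proof (Rmult_le_Rabs_mult C1 _ H). pose proof (Rmult_le_Rabs_mult C2 _ H0).
    pose proof (Rabs_pos C1). pose proof (Rabs_pos C2).
    assert (Rabs C1 * fsn F j1 g <= Rabs C1 * (C * fsn F l g)) by (apply Rmult_le_compat_l; auto).
    assert (Rabs C2 * fsn F j2 g <= Rabs C2 * (C * fsn F l g)) by (apply Rmult_le_compat_l; auto).
    nra.
Qed.

Lemma fdual_scale c y : fdual F y -> fdual F (fun g => kmul c (y g)).
Proof.
  intros [A1 [B1 [j1 [C1 H1]]]]. split; [|split].
  - intros. rewrite A1 by auto. ring.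
  - intros. rewrite B1 by auto. ring.
  - exists j1, (kabs c * C1). intros g Hg. rewrite kabs_mult.
    specialize (H1 g Hg). pose proof (kabs_ge0 c). nra.
Qed.

Lemma fdual_0 : fdual F (fun _ => k0).
Proof.
  split; [|split]; [intros; ring|intros; ring|].
  destruct (fidx_inh _ _ _ _ _ _ F) as [j]. exists j, 0. intros. rewrite kabs_0. lra.
Qed.

Lemma fdual_sub y1 y2 : fdual F y1 -> fdual F y2 -> fdual F (fun g => kadd (y1 g) (kopp (y2 g))).
Proof.
  intros. replace (fun g => kadd (y1 g) (kopp (y2 g)))
    with (fun g => kadd (y1 g) ((fun g => kmul (kopp k1) (y2 g)) g)).
  - apply fdual_add, fdual_scale; auto.
  - apply functional_extensionality; intro; ring.
Qed.

Lemma fopen_kre_gt (P : Prop) y beta : fdual F y -> fopen F (fun g => P /\ Kre (y g) > beta).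
Proof.
  intros Hy. pose proof (fdual_linear y Hy) as Ly. destruct Hy as [_ [_ [j [C HC]]]].
  intros f0 Hf0 [HP Hb]. pose proof (Rabs_pos C).
  exists j, ((Kre (y f0) - beta) / (Rabs C + 1)). split; [apply Rdiv_lt_0_compat; lra|].
  intros g Hg Hd. split; auto.
  assert (Hdiff : Rabs (Kre (y (fsub g f0))) < Kre (y f0) - beta).
  { eapply Rle_lt_trans; [apply Rabs_kre_le|]. eapply Rle_lt_trans; [apply HC, memF_sub; auto|].
    pose proof (fsn_nonneg _ _ _ _ _ _ F j _ (memF_sub _ _ Hg Hf0)).
    apply Rle_lt_trans with ((Rabs C + 1) * fsn F j (fsub g f0));
      [pose proof (Rmult_le_Rabs_mult C _ H0); nra|].
    apply Rmult_lt_reg_l with (/ (Rabs C + 1)); [apply Rinv_0_lt_compat; lra|].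
    rewrite <- Rmult_assoc, Rinv_l, Rmult_1_l by lra. rewrite Rmult_comm. exact Hd. }
  rewrite linear_sub, kre_plus, kre_opp in Hdiff by auto.
  apply Rabs_def2 in Hdiff. lra.
Qed.

Lemma ball_mem g : Bn g -> memF g.
Proof. intros [[H _] _]; auto. Qed.

Lemma ball_0 : Bn fzero.
Proof.
  split; [split; [apply memF_0|exists 0]|]; intros x; rewrite TK_0, kabs_0; lra.
Qed.

Lemma ball_abs_convex : fabs_convex Bn.
Proof.
  intros g1 g2 c d [[M1 _] N1] [[M2 _] N2] Hcd.
  change (Bn (fadd (fscale c g1) (fscale d g2))).
  assert (Hm : memF (fadd (fscale c g1) (fscale d g2))) by (apply memF_add; apply memF_scale; auto).
  assert (Hb : nu_le TK nu (fadd (fscale c g1) (fscale d g2)) 1).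
  { intros x. rewrite TK_add, !TK_scale by (auto; apply memF_scale; auto).
    specialize (N1 x). specialize (N2 x). pose proof (nu_pos x).
    pose proof (kabs_triang (kmul c (TK g1 x)) (kmul d (TK g2 x))) as Htri.
    rewrite !kabs_mult in Htri. pose proof (kabs_ge0 c). pose proof (kabs_ge0 d).
    pose proof (kabs_ge0 (TK g1 x)). pose proof (kabs_ge0 (TK g2 x)).
    apply Rle_trans with ((kabs c * kabs (TK g1 x) + kabs d * kabs (TK g2 x)) * nu x);
      [apply Rmult_le_compat_r; lra|].
    assert (kabs c * (kabs (TK g1 x) * nu x) <= kabs c * 1) by (apply Rmult_le_compat_l; auto).
    assert (kabs d * (kabs (TK g2 x) * nu x) <= kabs d * 1) by (apply Rmult_le_compat_l; auto).
    nra. }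
  split; [split; [exact Hm|exists 1; exact Hb]|exact Hb].
Qed.

Lemma ball_scale c g : Bn g -> kabs c <= 1 -> Bn (fscale c g).
Proof.
  intros Hg Hc.
  replace (fscale c g) with (fadd (fscale c g) (fscale k0 fzero)).
  - apply ball_abs_convex; auto; [apply ball_0|rewrite kabs_0; lra].
  - apply functional_extensionality; intro; unfold fadd, fscale, fzero; ring.
Qed.

Lemma ball_conv t g1 g2 : 0 <= t <= 1 -> Bn g1 -> Bn g2 -> Bn (fconv t g1 g2).
Proof. intros Ht H1 H2. apply ball_abs_convex; auto. rewrite !kabs_ofR_pos; lra. Qed.

Lemma ball_normalize g t : inFnu F TK nu g -> nu_le TK nu g t -> 0 < t ->
  Bn (fscale (kofR (/ t)) g).
Proof.
  intros [Hm _] Hn Ht. pose proof (Rinv_0_lt_compat t Ht).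
  assert (Hb : nu_le TK nu (fscale (kofR (/ t)) g) 1).
  { intros x. rewrite TK_scale, kabs_mult, kabs_ofR_pos by (auto; lra).
    specialize (Hn x). rewrite Rmult_assoc. apply Rmult_le_reg_l with t; auto.
    rewrite <- Rmult_assoc, Rinv_r by lra. lra. }
  split; [split; [apply memF_scale; auto|exists 1; exact Hb]|exact Hb].
Qed.

Lemma nu_le_0_fzero g : inFnu F TK nu g -> nu_le TK nu g 0 -> g = fzero.
Proof.
  intros H1 H2. apply functional_extensionality. intros z.
  destruct Fnu_banach as [H _]. apply H; auto.
Qed.

Lemma ball_bound_scale y c g t : linear_on_F y -> (forall g, Bn g -> kabs (y g) <= c) ->
  inFnu F TK nu g -> nu_le TK nu g t -> 0 <= t -> kabs (y g) <= c * t.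
Proof.
  intros Ly Hy Hg Hn [Ht|<-].
  - pose proof (Hy _ (ball_normalize g t Hg Hn Ht)) as Hyt. destruct Ly as [_ L2].
    rewrite L2, kabs_mult, kabs_ofR_pos in Hyt
      by (try (destruct Hg; auto); left; apply Rinv_0_lt_compat; auto).
    apply Rmult_le_compat_l with (r := t) in Hyt; [|lra].
    rewrite <- Rmult_assoc, Rinv_r in Hyt by lra. lra.
  - rewrite (nu_le_0_fzero g Hg Hn), linear_0, kabs_0 by auto. lra.
Qed.

Fixpoint list_max (l : list nat) : R :=
  match l with nil => 0 | n :: l => Rmax (INR n) (list_max l) end.

Lemma list_max_ge l n : In n l -> INR n <= list_max l.
Proof.
  induction l; simpl; [tauto|]. intros [<-|H]; [apply Rmax_l|].
  eapply Rle_trans; [apply IHl; auto|apply Rmax_r].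
Qed.

Lemma list_max_ge0 l : 0 <= list_max l.
Proof. induction l; simpl; [lra|]. eapply Rle_trans; [apply IHl|apply Rmax_r]. Qed.

(* The sets [{g | fsn j g < n}] cover the compact ball. *)
Lemma fdual_bounded_on_ball y : fdual F y -> exists c, 0 < c /\ forall g, Bn g -> kabs (y g) <= c.
Proof.
  intros [_ [_ [j [C HC]]]].
  destruct ball_compact as [HBm Hcov].
  destruct (Hcov nat (fun n g => fsn F j g < INR n)) as [l Hl].
  { intros n f0 Hf0 Hlt. exists j, (INR n - fsn F j f0). split; [lra|].
    intros g Hg Hd. pose proof (fsn_le_sub j g f0 Hg Hf0). lra. }
  { intros g Hg. destruct (INR_unbounded (fsn F j g)) as [n Hn]. exists n. lra. }
  exists (Rabs C * list_max l + 1). split; [pose proof (list_max_ge0 l); pose proof (Rabs_pos C); nra|].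
  intros g Hg. destruct (Hl g Hg) as [n [Hin Hn]]. pose proof (list_max_ge l n Hin).
  pose proof (HC g (HBm g Hg)). pose proof (fsn_nonneg _ _ _ _ _ _ F j g (HBm g Hg)).
  pose proof (Rmult_le_Rabs_mult C _ H1).
  assert (Rabs C * fsn F j g <= Rabs C * list_max l) by (apply Rmult_le_compat_l; [apply Rabs_pos|lra]).
  lra.
Qed.

(** * Approximation by finite combinations of weighted point evaluations *)

Variable U : w -> Prop.
Variable Cf : R.
Hypothesis Cf_pos : 0 < Cf.
Hypothesis U_fixes : forall g, inFnu F TK nu g -> forall c, 0 <= c ->
    (forall x, U x -> kabs (TK g x) * nu x <= c) -> nu_le TK nu g (Cf * c).

Definition weighted_eval (x : w) (g : Om -> Kt) : Kt := kmul (kofR (nu x)) (TK g x).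

(* A list [(x_i, a_i)] encodes the functional [sum_i a_i nu(x_i) T_{x_i}]. *)
Definition combo_eval (L : list (w * Kt)) (g : Om -> Kt) : Kt :=
  fold_right (fun p acc => kadd (kmul (snd p) (weighted_eval (fst p) g)) acc) k0 L.
Definition combo_l1 (L : list (w * Kt)) : R := fold_right (fun p acc => kabs (snd p) + acc) 0 L.
Definition supported_in_U (L : list (w * Kt)) : Prop := forall p, In p L -> U (fst p).
Definition admissible (r : R) (L : list (w * Kt)) : Prop := supported_in_U L /\ combo_l1 L <= r.
Definition combo_scale (c : Kt) (L : list (w * Kt)) := map (fun p => (fst p, kmul c (snd p))) L.
Definition combo_conv (t : R) L1 L2 := combo_scale (kofR (1 - t)) L1 ++ combo_scale (kofR t) L2.

Lemma combo_eval_app L1 L2 g : combo_eval (L1 ++ L2) g = kadd (combo_eval L1 g) (combo_eval L2 g).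
Proof. induction L1; simpl; [ring|]. unfold combo_eval in *; simpl. rewrite IHL1. ring. Qed.

Lemma combo_eval_scale c L g : combo_eval (combo_scale c L) g = kmul c (combo_eval L g).
Proof.
  induction L; simpl; unfold combo_eval in *; simpl; [ring|]. rewrite IHL. ring.
Qed.

Lemma combo_l1_app L1 L2 : combo_l1 (L1 ++ L2) = combo_l1 L1 + combo_l1 L2.
Proof. induction L1; simpl; unfold combo_l1 in *; simpl; [ring|]. rewrite IHL1. ring. Qed.

Lemma combo_l1_scale c L : combo_l1 (combo_scale c L) = kabs c * combo_l1 L.
Proof.
  induction L; simpl; unfold combo_l1 in *; simpl; [ring|]. rewrite IHL, kabs_mult. ring.
Qed.

Lemma admissible_nil r : 0 <= r -> admissible r nil.
Proof. split; [intros p []|unfold combo_l1; simpl; lra]. Qed.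

Lemma admissible_conv r t L1 L2 : 0 <= t <= 1 -> admissible r L1 -> admissible r L2 ->
  admissible r (combo_conv t L1 L2).
Proof.
  intros Ht [S1 N1] [S2 N2]. split.
  - intros p Hp. apply in_app_or in Hp. unfold combo_scale in Hp.
    destruct Hp as [Hp|Hp]; apply in_map_iff in Hp; destruct Hp as [q [<- Hq]]; simpl; auto.
  - unfold combo_conv. rewrite combo_l1_app, !combo_l1_scale, !kabs_ofR_pos by lra. nra.
Qed.

Lemma fdual_combo_eval L : fdual F (combo_eval L).
Proof.
  induction L as [|p L IH]; [exact fdual_0|].
  change (fdual F (fun g => kadd (kmul (snd p) (weighted_eval (fst p) g)) (combo_eval L g))).
  apply fdual_add; auto. apply (fdual_scale (snd p) (weighted_eval (fst p))).
  apply (fdual_scale (kofR (nu (fst p))) (fun g => TK g (fst p))), TK_dual.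
Qed.

Lemma kabs_weighted_eval x g : kabs (weighted_eval x g) = kabs (TK g x) * nu x.
Proof. unfold weighted_eval. rewrite kabs_mult, kabs_ofR_pos by (left; auto). ring. Qed.

Lemma combo_eval_ball L g : Bn g -> kabs (combo_eval L g) <= combo_l1 L.
Proof.
  intros [_ Hg]. induction L as [|p L IH]; unfold combo_eval, combo_l1 in *; simpl.
  - rewrite kabs_0; lra.
  - eapply Rle_trans; [apply kabs_triang|]. rewrite kabs_mult.
    pose proof (Hg (fst p)). rewrite <- kabs_weighted_eval in H.
    pose proof (kabs_ge0 (snd p)). pose proof (kabs_ge0 (weighted_eval (fst p) g)). nra.
Qed.

Lemma fixes_topology_witness y c g s : linear_on_F y -> 0 < c ->
  (forall g, Bn g -> kabs (y g) <= c) -> Bn g -> 0 <= s < kabs (y g) ->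
  exists x, U x /\ s < Cf * c * kabs (weighted_eval x g).
Proof.
  intros Ly Hc Hyc Hg Hs. apply NNPP. intro Hnone.
  assert (Hsmall : forall x, U x -> kabs (TK g x) * nu x <= s / (Cf * c)).
  { intros x Ux. rewrite <- kabs_weighted_eval.
    apply Rmult_le_reg_l with (Cf * c); [nra|].
    replace (Cf * c * (s / (Cf * c))) with s by (field; lra).
    apply Rnot_lt_le. intro. apply Hnone. eauto. }
  assert (Hq : 0 <= s / (Cf * c)) by (apply Rdiv_le_0_compat; nra).
  pose proof (U_fixes g (proj1 Hg) _ Hq Hsmall) as Hnu.
  pose proof (ball_bound_scale y c g _ Ly Hyc (proj1 Hg) Hnu ltac:(nra)).
  replace (c * (Cf * (s / (Cf * c)))) with s in H by (field; lra). lra.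
Qed.

Section Approximation.
Variables (y : (Om -> Kt) -> Kt) (c eps : R).
Hypothesis y_dual : fdual F y.
Hypothesis c_pos : 0 < c.
Hypothesis eps_pos : 0 < eps.
Hypothesis y_bounded : forall g, Bn g -> kabs (y g) <= c.

Let excess (L : list (w * Kt)) (g : Om -> Kt) := Kre (kadd (combo_eval L g) (kopp (y g))).

(* Either [Re y g] is already small, or [U] fixing the topology provides one
   point evaluation, rotated to be real, that dominates [y g]. *)
Lemma approx_pointwise g : Bn g -> exists L, admissible (Cf * c) L /\ excess L g > - (eps / 2).
Proof.
  intros Hg. unfold excess.
  destruct (Rlt_dec (Kre (y g)) (eps / 2)) as [Hlt|Hge].
  { exists nil. split; [apply admissible_nil; nra|].
    unfold combo_eval; simpl. rewrite kre_plus, kre_opp, kre_0. lra. }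
  pose proof (kre_le_kabs (y g)).
  destruct (fixes_topology_witness y c g (Kre (y g) - eps / 2) (fdual_linear y y_dual) c_pos
              y_bounded Hg ltac:(lra)) as [x [Ux Hx]].
  destruct (kabs_rotation (weighted_eval x g)) as [l [Hl1 Hl2]].
  exists ((x, kmul (kofR (Cf * c)) l) :: nil). split; [split|].
  - intros p [<-|[]]. auto.
  - unfold combo_l1; simpl. rewrite kabs_mult, kabs_ofR_pos, Hl1; nra.
  - unfold combo_eval; simpl.
    replace (kadd (kadd (kmul (kmul (kofR (Cf * c)) l) (weighted_eval x g)) k0) (kopp (y g)))
      with (kadd (kofR (Cf * c * kabs (weighted_eval x g))) (kopp (y g)))
      by (rewrite kofR_mult, <- Hl2; ring).
    rewrite kre_plus, kre_opp, kre_ofR. lra.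
Qed.

(* Compactness reduces the pointwise statement to finitely many combinations,
   which the minimax theorem merges into a single one. *)
Lemma approx_uniform_re : exists L, admissible (Cf * c) L /\ forall g, Bn g -> excess L g > - eps.
Proof.
  set (h := fun L g => excess L g + eps).
  destruct ball_compact as [HBm Hcov].
  destruct (Hcov (list (w * Kt)) (fun L g => admissible (Cf * c) L /\ excess L g > - (eps / 2)))
    as [ls Hls].
  { intros L. apply fopen_kre_gt, fdual_sub; [apply fdual_combo_eval|auto]. }
  { intros g Hg. destruct (approx_pointwise g Hg) as [L HL]. eauto. }
  destruct (finite_cover_minimax (Om -> Kt) fconv (list (w * Kt)) (admissible (Cf * c))
              combo_conv h (Cf * c + c + eps) Bn nil) with (l := ls) (X := Bn) (d := eps / 2)
    as [L0 [HL0 [d' [Hd' Hh]]]].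
  - apply admissible_nil; nra.
  - intros t L1 L2 Ht. apply admissible_conv; auto.
  - intros t L1 L2 g Ht _ _ _. unfold h, excess, combo_conv.
    rewrite combo_eval_app, !combo_eval_scale, kconv_sub, kre_conv. ring.
  - intros L _ t g1 g2 Ht X1 X2. unfold h, excess.
    rewrite (linear_conv (combo_eval L)), (linear_conv y)
      by (try apply fdual_linear; auto using fdual_combo_eval, ball_mem).
    replace (kadd (kadd (kmul (kofR (1 - t)) (combo_eval L g1)) (kmul (kofR t) (combo_eval L g2)))
              (kopp (kadd (kmul (kofR (1 - t)) (y g1)) (kmul (kofR t) (y g2)))))
      with (kadd (kmul (kofR (1 - t)) (kadd (combo_eval L g1) (kopp (y g1))))
                 (kmul (kofR t) (kadd (combo_eval L g2) (kopp (y g2))))) by ring.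
    rewrite kre_conv. ring.
  - intros L g [_ HL] Hg. unfold h, excess.
    pose proof (Rabs_kre_le (kadd (combo_eval L g) (kopp (y g)))).
    pose proof (kabs_triang (combo_eval L g) (kopp (y g))). rewrite kabs_opp in H0.
    pose proof (combo_eval_ball L g Hg). pose proof (y_bounded g Hg).
    eapply Rle_trans; [apply Rabs_triang|]. rewrite (Rabs_right eps) by lra. lra.
  - auto.
  - intros t g1 g2 Ht H1 H2. apply ball_conv; auto.
  - lra.
  - intros g Hg. destruct (Hls g Hg) as [L [HL [HAL HL2]]]. exists L. unfold h. split; [|split]; auto. lra.
  - exists L0. split; auto. intros g Hg. specialize (Hh g Hg). unfold h in Hh. lra.
Qed.
End Approximation.

(* The ball is balanced, so a bound on real parts is a bound on moduli. *)
Lemma ball_kre_lt_kabs_le z eps : linear_on_F z -> (forall g, Bn g -> Kre (z g) < eps) ->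
  forall g, Bn g -> kabs (z g) <= eps.
Proof.
  intros [_ Lz] Hz g Hg. destruct (kabs_rotation (z g)) as [l [Hl1 Hl2]].
  specialize (Hz (fscale l g) (ball_scale l g Hg ltac:(lra))).
  rewrite Lz, Hl2, kre_ofR in Hz by (apply ball_mem; auto). lra.
Qed.

Lemma approx_by_combos y c eps : fdual F y -> 0 < c -> 0 < eps ->
  (forall g, Bn g -> kabs (y g) <= c) ->
  exists L, admissible (Cf * c) L /\
    forall g, Bn g -> kabs (kadd (y g) (kopp (combo_eval L g))) <= eps.
Proof.
  intros Hy Hc He Hyc. destruct (approx_uniform_re y c eps Hy Hc He Hyc) as [L [HL Hre]].
  exists L. split; auto.
  apply ball_kre_lt_kabs_le; [apply fdual_linear, fdual_sub; auto using fdual_combo_eval|].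
  intros g Hg. specialize (Hre g Hg).
  replace (kadd (y g) (kopp (combo_eval L g))) with (kopp (kadd (combo_eval L g) (kopp (y g))))
    by ring.
  rewrite kre_opp. lra.
Qed.

(** * Construction of the extension *)

Variables (E : LCHS KK) (G : (car E -> Kt) -> Prop) (f : w -> car E).
Hypothesis f_lb : lb E nu U f.
Hypothesis E_locally_complete : locally_complete E.
Hypothesis G_separating : separating_subspace E G.
Hypothesis f_FnuG : FnuG F E TK nu G U f.

Notation vadd := (Defs.vadd E). Notation vscale := (Defs.vscale E). Notation vzero := (Defs.vzero E).
Notation vsub := (Defs.vsub E). Notation sn := (Defs.sn E).

Definition lb_bound a Ca := forall x, U x -> sn a (vscale (kofR (nu x)) (f x)) <= Ca.

(* The closed bounded absolutely convex set to which local completeness is applied;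
   its gauge is the weakest one dominating every seminorm bound on
   [{nu(x) f(x) | x in U}]. *)
Definition lb_set (v : car E) : Prop := forall a Ca, lb_bound a Ca -> 0 <= Ca -> sn a v <= Ca.

Lemma lb_bound_ex a : exists Ca, 0 <= Ca /\ lb_bound a Ca.
Proof.
  destruct (f_lb a) as [C HC]. exists (Rmax C 0). split; [apply Rmax_r|].
  intros x Ux. eapply Rle_trans; [|apply Rmax_l]. apply HC. exists x; auto.
Qed.

Lemma mulset_lb_set r v : 0 < r ->
  (mulset E lb_set r v <-> forall a Ca, lb_bound a Ca -> 0 <= Ca -> sn a v <= r * Ca).
Proof.
  intros Hr. split.
  - intros [d [Hd ->]] a Ca HCa HC0. rewrite sn_hom, kabs_ofR_pos by lra.
    specialize (Hd a Ca HCa HC0). nra.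
  - intros H. pose proof (Rinv_0_lt_compat r Hr). exists (vscale (kofR (/ r)) v). split.
    + intros a Ca HCa HC0. rewrite sn_hom, kabs_ofR_pos by lra.
      specialize (H a Ca HCa HC0). apply Rmult_le_reg_l with r; auto.
      rewrite <- Rmult_assoc, Rinv_r by lra. lra.
    + rewrite vscale_assoc, <- kofR_mult, Rinv_r, kofR_1, vscale_1 by lra. auto.
Qed.

Lemma lb_set_closed : is_closed E lb_set.
Proof.
  intros v Hv. apply not_all_ex_not in Hv. destruct Hv as [a Hv].
  apply not_all_ex_not in Hv. destruct Hv as [Ca Hv].
  apply imply_to_and in Hv. destruct Hv as [HCa Hv]. apply imply_to_and in Hv. destruct Hv as [HC0 Hv].
  apply Rnot_le_lt in Hv.
  exists a, (sn a v - Ca). split; [lra|]. intros y Hy HyD.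
  specialize (HyD a Ca HCa HC0). pose proof (sn_le_vsub E a v y). rewrite sn_vsub_comm in Hy. lra.
Qed.

Lemma lb_set_bounded : Defs.bounded E lb_set.
Proof. intros a. destruct (lb_bound_ex a) as [Ca [HC0 HCa]]. exists Ca. intros v Hv. apply Hv; auto. Qed.

Lemma lb_set_abs_convex : abs_convex E lb_set.
Proof.
  intros x y c d Hx Hy Hcd a Ca HCa HC0.
  eapply Rle_trans; [apply sn_tri|]. rewrite !sn_hom.
  specialize (Hx a Ca HCa HC0). specialize (Hy a Ca HCa HC0).
  pose proof (kabs_ge0 c). pose proof (kabs_ge0 d).
  assert (kabs c * sn a x <= kabs c * Ca) by (apply Rmult_le_compat_l; auto).
  assert (kabs d * sn a y <= kabs d * Ca) by (apply Rmult_le_compat_l; auto).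
  nra.
Qed.

Definition combo_vec (L : list (w * Kt)) : car E :=
  fold_right (fun p acc => vadd (vscale (snd p) (vscale (kofR (nu (fst p))) (f (fst p)))) acc)
    vzero L.

Lemma sn_combo_vec L a Ca : supported_in_U L -> lb_bound a Ca -> 0 <= Ca ->
  sn a (combo_vec L) <= combo_l1 L * Ca.
Proof.
  intros HL HCa HC0. induction L as [|p L IH]; unfold combo_l1 in *; simpl.
  - rewrite sn_vzero. lra.
  - eapply Rle_trans; [apply sn_tri|]. rewrite sn_hom, Rmult_plus_distr_r.
    assert (IH' := IH (fun q Hq => HL q (or_intror Hq))).
    assert (sn a (vscale (kofR (nu (fst p))) (f (fst p))) <= Ca) by (apply HCa, HL; left; auto).
    pose proof (kabs_ge0 (snd p)).
    assert (kabs (snd p) * sn a (vscale (kofR (nu (fst p))) (f (fst p))) <= kabs (snd p) * Ca)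
      by (apply Rmult_le_compat_l; auto).
    lra.
Qed.

Lemma dual_combo_vec e h L : is_dual E e -> (forall x, U x -> TK h x = e (f x)) ->
  supported_in_U L -> e (combo_vec L) = combo_eval L h.
Proof.
  intros He Hh HL. induction L as [|p L IH]; simpl; [apply dual_vzero; auto|].
  destruct He as [H1 [H2 _]]. rewrite H1, !H2.
  unfold combo_eval in *; simpl. rewrite IH by (intros q Hq; apply HL; right; auto).
  unfold weighted_eval. rewrite Hh by (apply HL; left; auto). auto.
Qed.

(* [z] is the value at [y] of the operator we construct: it is prescribed on [G],
   through the [F nu]-representatives of the functions [e o f]. *)
Definition represents (y : (Om -> Kt) -> Kt) (z : car E) : Prop :=
  forall e, G e -> forall h, inFnu F TK nu h -> (forall x, U x -> TK h x = e (f x)) -> e z = y h.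

Lemma represents_unique y z1 z2 : represents y z1 -> represents y z2 -> z1 = z2.
Proof.
  intros H1 H2. apply (vsub_eq_vzero E). destruct G_separating as [HGd [_ [_ [_ Hsep]]]].
  apply Hsep. intros e He. destruct (f_FnuG e He) as [h [Hh Hhf]].
  rewrite dual_vsub, (H1 e He h Hh Hhf), (H2 e He h Hh Hhf) by auto. ring.
Qed.

Section Iteration.
Variables (y : (Om -> Kt) -> Kt) (c : R).
Hypothesis y_dual : fdual F y.
Hypothesis c_pos : 0 < c.
Hypothesis y_bounded : forall g, Bn g -> kabs (y g) <= c.

Definition good_step (r : (Om -> Kt) -> Kt) (cc : R) (L : list (w * Kt)) : Prop :=
  admissible (Cf * cc) L /\ forall g, Bn g -> kabs (kadd (r g) (kopp (combo_eval L g))) <= cc / 2.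

Definition pick_step r cc : list (w * Kt) := epsilon (inhabits nil) (good_step r cc).

Lemma pick_step_spec r cc : fdual F r -> 0 < cc -> (forall g, Bn g -> kabs (r g) <= cc) ->
  good_step r cc (pick_step r cc).
Proof.
  intros Hr Hcc Hrc. unfold pick_step. apply epsilon_spec.
  apply (approx_by_combos r cc (cc / 2)); auto. lra.
Qed.

(* Halving the residual at each step: [y = sum_n combo_eval (step n) + residual]. *)
Fixpoint residual (n : nat) : (Om -> Kt) -> Kt :=
  match n with
  | O => y
  | S m => fun g => kadd (residual m g) (kopp (combo_eval (pick_step (residual m) (c * (/ 2) ^ m)) g))
  end.

Definition step (n : nat) := pick_step (residual n) (c * (/ 2) ^ n).

Lemma residual_bounded n :
  fdual F (residual n) /\ forall g, Bn g -> kabs (residual n g) <= c * (/ 2) ^ n.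
Proof.
  induction n as [|n [IH1 IH2]]; [simpl; split; [|intros; rewrite Rmult_1_r]; auto|].
  pose proof (half_pow_pos n).
  destruct (pick_step_spec (residual n) (c * (/ 2) ^ n) IH1 ltac:(nra) IH2) as [_ Hstep].
  split; [apply fdual_sub; auto using fdual_combo_eval|].
  intros g Hg. specialize (Hstep g Hg). simpl. lra.
Qed.

Lemma step_spec n : good_step (residual n) (c * (/ 2) ^ n) (step n).
Proof.
  destruct (residual_bounded n) as [H1 H2]. pose proof (half_pow_pos n).
  apply pick_step_spec; auto. nra.
Qed.

Fixpoint partial_sum (n : nat) (h : Om -> Kt) : Kt :=
  match n with O => k0 | S m => kadd (partial_sum m h) (combo_eval (step m) h) end.

Lemma residual_partial_sum n h : residual n h = kadd (y h) (kopp (partial_sum n h)).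
Proof. induction n; simpl; [ring|]. rewrite IHn. fold (step n). ring. Qed.

Fixpoint partial_vec (n : nat) : car E :=
  match n with O => vzero | S m => vadd (partial_vec m) (combo_vec (step m)) end.

Lemma dual_partial_vec e h n : is_dual E e -> (forall x, U x -> TK h x = e (f x)) ->
  e (partial_vec n) = partial_sum n h.
Proof.
  intros He Hh. induction n; simpl; [apply dual_vzero; auto|].
  pose proof He as [H1 _]. rewrite H1, IHn. f_equal.
  apply dual_combo_vec; auto. apply (step_spec n).
Qed.

Lemma sn_partial_vec_diff a Ca : lb_bound a Ca -> 0 <= Ca -> forall n d,
  sn a (vsub (partial_vec (n + d)) (partial_vec n))
  <= 2 * (Cf * c * Ca) * ((/ 2) ^ n - (/ 2) ^ (n + d)).
Proof.
  intros HCa HC0 n d. induction d.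
  - rewrite Nat.add_0_r. unfold Defs.vsub. rewrite vadd_opp, sn_vzero. lra.
  - rewrite Nat.add_succ_r. simpl partial_vec. rewrite vsub_vadd_l.
    eapply Rle_trans; [apply sn_tri|].
    destruct (step_spec (n + d)) as [[HS Hl] _].
    pose proof (sn_combo_vec (step (n + d)) a Ca HS HCa HC0).
    assert (combo_l1 (step (n + d)) * Ca <= Cf * (c * (/ 2) ^ (n + d)) * Ca)
      by (apply Rmult_le_compat_r; auto).
    simpl. pose proof (half_pow_pos (n + d)). nra.
Qed.

Lemma sn_partial_vec_cauchy a Ca N : lb_bound a Ca -> 0 <= Ca -> forall n m, (N <= n)%nat -> (N <= m)%nat ->
  sn a (vsub (partial_vec n) (partial_vec m)) <= 2 * (Cf * c * Ca) * (/ 2) ^ N.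
Proof.
  intros HCa HC0. assert (0 <= Cf * c * Ca) by (apply Rmult_le_pos; nra).
  assert (Hle : forall n m, (N <= n)%nat -> (n <= m)%nat ->
            sn a (vsub (partial_vec m) (partial_vec n)) <= 2 * (Cf * c * Ca) * (/ 2) ^ N).
  { intros n m Hn Hnm. replace m with (n + (m - n))%nat by lia.
    eapply Rle_trans; [apply (sn_partial_vec_diff a Ca HCa HC0)|].
    pose proof (half_pow_pos (n + (m - n))). pose proof (half_pow_le N n Hn).
    apply Rmult_le_compat_l; lra. }
  intros n m Hn Hm. destruct (Nat.le_ge_cases n m).
  - rewrite sn_vsub_comm. auto.
  - auto.
Qed.

Lemma sn_partial_vec a Ca n : lb_bound a Ca -> 0 <= Ca -> sn a (partial_vec n) <= 2 * (Cf * c * Ca).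
Proof.
  intros HCa HC0. pose proof (sn_partial_vec_diff a Ca HCa HC0 0 n) as H. simpl in H.
  rewrite vsub_vzero in H. pose proof (half_pow_pos n).
  assert (0 <= Cf * c * Ca) by (apply Rmult_le_pos; nra). nra.
Qed.

(* The partial sums form a Cauchy sequence for the gauge of [lb_set]. *)
Lemma partial_vec_limit : exists x, forall eps, 0 < eps -> exists N, forall n, (N <= n)%nat ->
  mulset E lb_set eps (vsub (partial_vec n) x).
Proof.
  assert (HQ : 0 < 2 * Cf * c) by nra.
  destruct (INR_unbounded (2 * Cf * c)) as [N0 HN0].
  destruct (E_locally_complete lb_set lb_set_closed lb_set_bounded lb_set_abs_convex partial_vec)
    as [x [_ Hx]]; [| |exists x; exact Hx].
  - intros n. exists N0. apply mulset_lb_set; [lra|]. intros a Ca HCa HC0.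
    pose proof (sn_partial_vec a Ca n HCa HC0). nra.
  - intros eps He. destruct (half_pow_lt (eps / (2 * Cf * c))) as [N HN];
      [apply Rdiv_lt_0_compat; lra|].
    exists N. intros n m Hn Hm. apply mulset_lb_set; auto. intros a Ca HCa HC0.
    pose proof (sn_partial_vec_cauchy a Ca N HCa HC0 n m Hn Hm).
    assert (2 * Cf * c * (/ 2) ^ N <= eps).
    { apply Rmult_lt_compat_l with (r := 2 * Cf * c) in HN; [|lra].
      replace (2 * Cf * c * (eps / (2 * Cf * c))) with eps in HN by (field; lra). lra. }
    nra.
Qed.

Section Limit.
Variable x : car E.
Hypothesis x_limit : forall eps, 0 < eps -> exists N, forall n, (N <= n)%nat ->
  mulset E lb_set eps (vsub (partial_vec n) x).

Lemma sn_limit a Ca : lb_bound a Ca -> 0 <= Ca -> sn a x <= 2 * (Cf * c * Ca).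
Proof.
  intros HCa HC0. apply Rnot_lt_le. intro Hgt.
  set (gap := sn a x - 2 * (Cf * c * Ca)).
  destruct (x_limit (gap / (Ca + 1))) as [N HN]; [apply Rdiv_lt_0_compat; unfold gap; lra|].
  specialize (HN N (le_n N)). rewrite mulset_lb_set in HN by (apply Rdiv_lt_0_compat; unfold gap; lra).
  specialize (HN a Ca HCa HC0).
  pose proof (sn_le_vsub E a x (partial_vec N)). rewrite sn_vsub_comm in H.
  pose proof (sn_partial_vec a Ca N HCa HC0).
  assert (gap / (Ca + 1) * Ca < gap).
  { apply Rmult_lt_reg_r with (Ca + 1); [lra|]. field_simplify; unfold gap; nra. }
  unfold gap in *. lra.
Qed.

Lemma dual_partial_vec_limit e eta : is_dual E e -> 0 < eta ->
  exists N, forall n, (N <= n)%nat -> kabs (e (vsub (partial_vec n) x)) < eta.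
Proof.
  intros [_ [_ [ae [Ce HCe]]]] Heta. destruct (lb_bound_ex ae) as [Ca [HC0 HCa]].
  pose proof (Rabs_pos Ce).
  set (eps1 := eta / (Rabs Ce * Ca + 1)).
  destruct (x_limit eps1) as [N HN]; [apply Rdiv_lt_0_compat; nra|].
  exists N. intros n Hn. specialize (HN n Hn).
  rewrite mulset_lb_set in HN by (apply Rdiv_lt_0_compat; nra). specialize (HN ae Ca HCa HC0).
  eapply Rle_lt_trans; [apply HCe|].
  eapply Rle_lt_trans; [apply Rmult_le_Rabs_mult, sn_nonneg|].
  apply Rle_lt_trans with (Rabs Ce * (eps1 * Ca)); [apply Rmult_le_compat_l; auto|].
  replace (Rabs Ce * (eps1 * Ca)) with (eta * (Rabs Ce * Ca / (Rabs Ce * Ca + 1)))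
    by (unfold eps1; field; nra).
  assert (Rabs Ce * Ca / (Rabs Ce * Ca + 1) < 1).
  { apply Rmult_lt_reg_r with (Rabs Ce * Ca + 1); [nra|]. field_simplify; nra. }
  nra.
Qed.

Lemma residual_limit h eta : inFnu F TK nu h -> 0 < eta ->
  exists N, forall n, (N <= n)%nat -> kabs (residual n h) < eta.
Proof.
  intros Hh Heta. pose proof Hh as [_ [Ch HCh]].
  set (th := Rmax Ch 0).
  assert (Hth : nu_le TK nu h th) by (intros z; eapply Rle_trans; [apply HCh|apply Rmax_l]).
  assert (Hth0 : 0 <= th) by apply Rmax_r.
  destruct (half_pow_lt (eta / (c * th + 1))) as [N HN]; [apply Rdiv_lt_0_compat; nra|].
  exists N. intros n Hn. destruct (residual_bounded n) as [Rn1 Rn2].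
  pose proof (ball_bound_scale (residual n) _ h th (fdual_linear _ Rn1) Rn2 Hh Hth Hth0).
  pose proof (half_pow_le N n Hn). pose proof (half_pow_pos n).
  apply Rmult_lt_compat_r with (r := c * th + 1) in HN; [|nra].
  replace (eta / (c * th + 1) * (c * th + 1)) with eta in HN by (field; nra).
  nra.
Qed.

Lemma limit_represents : represents y x.
Proof.
  intros e He h Hh Hhf.
  pose proof (proj1 G_separating e He) as He'.
  apply ksub_eq_0, kabs_eq_0, Rle_antisym; [|apply kabs_ge0].
  apply Rnot_lt_le. intro Hpos. set (eta := kabs (kadd (e x) (kopp (y h)))) in *.
  destruct (dual_partial_vec_limit e (eta / 2) He' ltac:(lra)) as [N1 HN1].
  destruct (residual_limit h (eta / 2) Hh ltac:(lra)) as [N2 HN2].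
  specialize (HN1 (Nat.max N1 N2) (Nat.le_max_l N1 N2)).
  specialize (HN2 (Nat.max N1 N2) (Nat.le_max_r N1 N2)).
  assert (Hsplit : kadd (e x) (kopp (y h))
    = kadd (kopp (e (vsub (partial_vec (Nat.max N1 N2)) x))) (kopp (residual (Nat.max N1 N2) h))).
  { rewrite residual_partial_sum, dual_vsub, (dual_partial_vec e h) by auto. ring. }
  pose proof (kabs_triang (kopp (e (vsub (partial_vec (Nat.max N1 N2)) x)))
                (kopp (residual (Nat.max N1 N2) h))).
  rewrite !kabs_opp, <- Hsplit in H. fold eta in H. lra.
Qed.
End Limit.

Lemma exists_representative : exists z, represents y z /\
  forall a Ca, lb_bound a Ca -> 0 <= Ca -> sn a z <= 2 * (Cf * c * Ca).
Proof.
  destruct partial_vec_limit as [x Hx].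
  exists x. split; [apply limit_represents|apply sn_limit]; auto.
Qed.
End Iteration.

Definition extension_op (y : (Om -> Kt) -> Kt) : car E := epsilon (inhabits vzero) (represents y).

Lemma extension_op_represents y : fdual F y -> represents y (extension_op y).
Proof.
  intros Hy. destruct (fdual_bounded_on_ball y Hy) as [c [Hc Hyc]].
  destruct (exists_representative y c Hy Hc Hyc) as [z [Hz _]].
  unfold extension_op. apply epsilon_spec. eauto.
Qed.

Lemma sn_extension_op y c a Ca : fdual F y -> 0 < c -> (forall g, Bn g -> kabs (y g) <= c) ->
  lb_bound a Ca -> 0 <= Ca -> sn a (extension_op y) <= 2 * (Cf * c * Ca).
Proof.
  intros Hy Hc Hyc HCa HC0. destruct (exists_representative y c Hy Hc Hyc) as [z [Hz Hb]].
  rewrite (represents_unique y (extension_op y) z (extension_op_represents y Hy) Hz). auto.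
Qed.

(* The bound [2 Cf c Ca] with [c = 0] is obtained as the limit of positive [c]. *)
Lemma sn_extension_op_le y c a Ca : fdual F y -> (forall g, Bn g -> kabs (y g) <= c) ->
  lb_bound a Ca -> 0 <= Ca -> sn a (extension_op y) <= 2 * Cf * Ca * c.
Proof.
  intros Hy Hyc HCa HC0.
  assert (Hc0 : 0 <= c).
  { specialize (Hyc fzero ball_0). rewrite linear_0, kabs_0 in Hyc; auto. apply fdual_linear; auto. }
  destruct Hc0 as [Hc|<-]; [pose proof (sn_extension_op y c a Ca Hy Hc Hyc HCa HC0); nra|].
  rewrite Rmult_0_r. apply Rnot_lt_le. intro Hp.
  set (c' := sn a (extension_op y) / (2 * Cf * Ca + 1)).
  assert (Hc' : 0 < c') by (unfold c'; apply Rdiv_lt_0_compat; nra).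
  assert (Hyc' : forall g, Bn g -> kabs (y g) <= c') by (intros g Hg; specialize (Hyc g Hg); lra).
  pose proof (sn_extension_op y c' a Ca Hy Hc' Hyc' HCa HC0).
  assert ((2 * Cf * Ca) / (2 * Cf * Ca + 1) < 1).
  { apply Rmult_lt_reg_r with (2 * Cf * Ca + 1); [nra|]. field_simplify; nra. }
  assert (2 * (Cf * c' * Ca) = sn a (extension_op y) * ((2 * Cf * Ca) / (2 * Cf * Ca + 1)))
    by (unfold c'; field; nra).
  nra.
Qed.

Lemma extension_op_eps : is_eps F E extension_op.
Proof.
  destruct G_separating as [HGd _].
  split; [|split; [|split]].
  - intros y1 y2 H1 H2 Heq. apply (represents_unique y2); [|apply extension_op_represents; auto].
    intros e He h Hh Hhf. rewrite (extension_op_represents y1 H1 e He h Hh Hhf).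
    apply Heq. destruct Hh; auto.
  - intros y1 y2 H1 H2. apply (represents_unique (fun g => kadd (y1 g) (y2 g)));
      [apply extension_op_represents, fdual_add; auto|].
    intros e He h Hh Hhf. destruct (HGd e He) as [Ea _].
    rewrite Ea, (extension_op_represents y1 H1 e He h Hh Hhf),
      (extension_op_represents y2 H2 e He h Hh Hhf). auto.
  - intros c0 y Hy. apply (represents_unique (fun g => kmul c0 (y g)));
      [apply extension_op_represents, fdual_scale; auto|].
    intros e He h Hh Hhf. destruct (HGd e He) as [_ [Es _]].
    rewrite Es, (extension_op_represents y Hy e He h Hh Hhf). auto.
  - intros a. destruct (lb_bound_ex a) as [Ca [HC0 HCa]].
    exists Bn, (2 * Cf * Ca). split; [exact ball_compact|]. split; [exact ball_abs_convex|].
    intros y Hy c Hyc. apply sn_extension_op_le; auto.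
Qed.

Lemma extension_op_polar_bounded :
  Defs.bounded E (fun v => exists y, Bpolar F TK nu y /\ v = extension_op y).
Proof.
  intros a. destruct (lb_bound_ex a) as [Ca [HC0 HCa]]. exists (2 * (Cf * 1 * Ca)).
  intros v [y [[Hy Hp] ->]]. apply sn_extension_op; auto. lra.
Qed.

Lemma extension_op_eval x : U x -> extension_op (fun g => TK g x) = f x.
Proof.
  intros Ux. apply (represents_unique (fun g => TK g x)); [apply extension_op_represents, TK_dual|].
  intros e He h Hh Hhf. rewrite Hhf; auto.
Qed.

Lemma exists_extension_op : exists u, is_eps F E u /\
  Defs.bounded E (fun v => exists y, Bpolar F TK nu y /\ v = u y) /\
  forall x, U x -> u (fun g => TK g x) = f x.
Proof.
  exists extension_op. split; [|split].
  - exact extension_op_eps.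
  - exact extension_op_polar_bounded.
  - exact extension_op_eval.
Qed.
End Construction.
End Field.

Lemma zero_is_eps (k : KField) (E : LCHS (scal k)) (Om : Type) (F : FScal (scal k) Om) :
  is_eps F E (fun _ => vzero E).
Proof.
  split; [|split; [|split]].
  - reflexivity.
  - intros. rewrite vadd_0. reflexivity.
  - intros. rewrite vscale_0_r. reflexivity.
  - intros a. exists (fun _ => False), 0. split; [|split].
    + split; [intros _ []|]. intros I O _ _. exists nil. intros _ [].
    + intros g1 g2 c d [].
    + intros. rewrite sn_vzero. lra.
Qed.

Theorem mainTheorem2 (k : KField) (E : LCHS (scal k)) (Om w : Type)
  (G : (car E -> Kt (scal k)) -> Prop)
  (F : FScal (scal k) Om) (FE : FVec E Om)
  (TK : (Om -> Kt (scal k)) -> (w -> Kt (scal k)))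
  (TE : (Om -> car E) -> (w -> car E))
  (nu : w -> R) (U : w -> Prop) :
  inhabited Om -> inhabited w ->
  locally_complete E ->
  separating_subspace E G ->
  (forall x : Om, fdual F (fun f => f x)) ->
  eps_into_compatible F E FE ->
  TK_linear F TK -> TE_linear E FE TE ->
  consistent F E FE TK TE ->
  strong F E FE TK TE ->
  (forall x, 0 < nu x) ->
  Fnu_Banach F TK nu ->
  fcompact F (Bnu F TK nu) ->
  fixes_topology F TK nu U ->
  forall f : w -> car E, FnuG F E TK nu G U f -> lb E nu U f ->
  exists Fn : Om -> car E, Feps_nu F E TK nu Fn /\ forall x, U x -> TE Fn x = f x.
Proof.
  intros _ _ HLC HG _ _ HTK _ Hcons _ Hnu HB Hcpt [Cf [HCf HCfix]] f HfG Hlb.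
  (* consistency applied to the zero operator shows that every [T_x] lies in the dual *)
  assert (HTKd : forall x, fdual F (fun g => TK g x))
    by (intros x; apply (proj2 (Hcons _ (zero_is_eps k E Om F)) x)).
  destruct (exists_extension_op k Om w F TK nu HTK Hnu HB Hcpt HTKd U Cf HCf HCfix E G f
              Hlb HLC HG HfG) as [u [Hu [Hbd Hpt]]].
  exists (Smap E u). split; [exists u; auto|].
  intros x Ux. rewrite (proj2 (proj2 (Hcons u Hu) x)). auto.
Qed.
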